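(* Let $(M,g)$ be a two-dimensional Riemannian manifold and $\xi$ a conformal Killing vector of $g$. Let $D$ be a real, symmetric, 2-covariant tensor which is transverse and traceless with respect to $g$ and satisfies the KID equation $\pounds_\xi D=0$. Then $D$ is a linear combination with constant coefficients of $$D_\xi:=\frac{1}{|\xi|_g^4}\Big(\boldsymbol{\xi}\otimes\boldsymbol{\xi}-\tfrac12|\xi|_g^2\,g\Big),\qquad D_{\xi,\xi^\perp}:=\frac{1}{2|\xi|_g^2|\xi^\perp|_g^2}\Big(\boldsymbol{\xi}\otimes\boldsymbol{\xi^\perp}+\boldsymbol{\xi^\perp}\otimes\boldsymbol{\xi}\Big),$$ where $\boldsymbol{\xi}:=g(\xi,\cdot)$ and $\boldsymbol{\xi^\perp}:=g(\xi^\perp,\cdot)$.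
   Context: Transverse and traceless means $\nabla_\alpha D^{\alpha\beta}=0$ and $D^\alpha{}_\alpha=0$, with indices raised by $g$ and $\nabla$ its Levi-Civita connection. In dimension $n$ the KID equation is $\pounds_\xi D+\frac{n-2}{n}(\mathrm{div}_g\xi)D=0$, which for $n=2$ reduces to $\pounds_\xi D=0$. $|\xi|_g^2=g(\xi,\xi)$. The vector field $\xi^\perp$ is a conformal Killing vector of $g$ which is everywhere orthogonal to $\xi$ and has the same norm as $\xi$ at every point (it is unique up to a global sign; in local coordinates $z$ with $g$ conformal to $4\,dz\,d\bar z$ and $\xi=f\partial_z+\bar f\partial_{\bar z}$, it is $\xi^\perp=i(f\partial_z-\bar f\partial_{\bar z})$). The tensors $D_\xi, D_{\xi,\xi^\perp}$ are defined where $\xi\neq0$; the result is local. *)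

(* concrete reals R with Coquelicot derivatives/continuity.
   The (local) statement is formulated in a coordinate chart: an open set U of R^2
   with a Riemannian metric given by its components g_ij. *)
From Stdlib Require Import Reals List.
From Coquelicot Require Import Coquelicot.
Open Scope R_scope.

Definition pt := (R * R)%type.

(* Coordinate indices: false = x^1, true = x^2. *)
Definition sum2 (f : bool -> R) : R := f false + f true.

Definition pd (i : bool) (f : pt -> R) : pt -> R :=
  fun p => if i then Derive (fun t => f (fst p, t)) (snd p)
           else Derive (fun t => f (t, snd p)) (fst p).

Fixpoint ipd (l : list bool) (f : pt -> R) : pt -> R :=
  match l with nil => f | i :: l' => pd i (ipd l' f) end.

Definition smooth_on (U : pt -> Prop) (f : pt -> R) : Prop :=
  forall (l : list bool) (p : pt), U p ->
    continuous (ipd l f) p /\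
    ex_derive (fun t => ipd l f (t, snd p)) (fst p) /\
    ex_derive (fun t => ipd l f (fst p, t)) (snd p).

Definition open_pt (U : pt -> Prop) : Prop := open U.

Definition vfield := bool -> pt -> R.
Definition cov2 := bool -> bool -> pt -> R.

Definition riemannian_on (U : pt -> Prop) (g : cov2) : Prop :=
  (forall i j, smooth_on U (g i j)) /\
  (forall i j p, U p -> g i j p = g j i p) /\
  (forall p (v : bool -> R), U p -> (v false <> 0 \/ v true <> 0) ->
     0 < sum2 (fun i => sum2 (fun j => g i j p * v i * v j))).

Definition gdet (g : cov2) (p : pt) : R :=
  g false false p * g true true p - g false true p * g true false p.

Definition ginv (g : cov2) (i j : bool) (p : pt) : R :=
  (if Bool.eqb i j then g (negb i) (negb j) p else - g i j p) / gdet g p.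

Definition chr (g : cov2) (k i j : bool) (p : pt) : R :=
  / 2 * sum2 (fun l => ginv g k l p *
      (pd i (g l j) p + pd j (g l i) p - pd l (g i j) p)).

Definition raise2 (g : cov2) (D : cov2) (a b : bool) (p : pt) : R :=
  sum2 (fun c => sum2 (fun d => ginv g a c p * ginv g b d p * D c d p)).

Definition divD (g : cov2) (D : cov2) (b : bool) (p : pt) : R :=
  sum2 (fun a => pd a (raise2 g D a b) p +
     sum2 (fun l => chr g a a l p * raise2 g D l b p
                  + chr g b a l p * raise2 g D a l p)).

Definition trD (g : cov2) (D : cov2) (p : pt) : R :=
  sum2 (fun a => sum2 (fun b => ginv g a b p * D a b p)).

Definition transverse_traceless_on (U : pt -> Prop) (g D : cov2) : Prop :=
  forall p, U p -> (forall b, divD g D b p = 0) /\ trD g D p = 0.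

Definition lie2 (xi : vfield) (T : cov2) (i j : bool) (p : pt) : R :=
  sum2 (fun k => xi k p * pd k (T i j) p
               + T k j p * pd i (xi k) p + T i k p * pd j (xi k) p).

Definition conformal_killing_on (U : pt -> Prop) (g : cov2) (xi : vfield) : Prop :=
  (forall i, smooth_on U (xi i)) /\
  exists phi : pt -> R, forall p, U p -> forall i j,
    lie2 xi g i j p = phi p * g i j p.

Definition gdot (g : cov2) (u v : vfield) (p : pt) : R :=
  sum2 (fun i => sum2 (fun j => g i j p * u i p * v j p)).

Definition gnorm2 (g : cov2) (u : vfield) (p : pt) : R := gdot g u u p.

Definition flat (g : cov2) (u : vfield) (i : bool) (p : pt) : R :=
  sum2 (fun j => g i j p * u j p).

Definition D_xi (g : cov2) (xi : vfield) (i j : bool) (p : pt) : R :=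
  / (gnorm2 g xi p ^ 2) *
  (flat g xi i p * flat g xi j p - / 2 * gnorm2 g xi p * g i j p).

Definition D_xi_xiperp (g : cov2) (xi xp : vfield) (i j : bool) (p : pt) : R :=
  / (2 * gnorm2 g xi p * gnorm2 g xp p) *
  (flat g xi i p * flat g xp j p + flat g xp i p * flat g xi j p).

(* In the frame (xi, xp), which is g-orthogonal with equal norms N = |xi|^2, a symmetric
   traceless D equals 2 F1 D_xi + 2 F2 D_{xi,xp} with F1 = D(xi,xi) and F2 = D(xi,xp), so it
   suffices to show that F1 and F2 are locally constant.
   Differentiating g(xi,xp) = 0 and |xp|^2 = |xi|^2 along the conformal Killing field xi shows
   [xi,xp] = 0, and the KID equation then gives xi(F1) = xi(F2) = 0.  Since
   g^-1 = (xi (x) xi + xp (x) xp)/N, the divergence condition reads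
   nabla D(xi,xi,.) + nabla D(xp,xp,.) = 0; metric compatibility expresses nabla_xi xi,
   nabla_xp xp and nabla_xp xi = nabla_xi xp in the frame through xi(N) and xp(N), and these cancel
   by tracelessness, leaving xp(F2) = -xi(F1) and xp(F1) = xi(F2).
   Everything is computed pointwise on first-order jets, where it is a rational identity. *)

From Stdlib Require Import Reals Lra Psatz FunctionalExtensionality.
From Coquelicot Require Import Coquelicot.
Open Scope R_scope.

(** * Pointwise linear algebra on jets *)

(* A jet of a vector field at a point is a pair [(X, dX)] with [dX k i] = d_k X^i,
   a jet of a 2-tensor a pair [(T, dT)] with [dT k i j] = d_k T_ij. *)
Definition vec2 := bool -> R.
Definition mat2 := bool -> bool -> R.
Definition dmat2 := bool -> bool -> bool -> R.

Definition det2 (G : mat2) : R :=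
  G false false * G true true - G false true * G true false.

Definition inv2 (G : mat2) (i j : bool) : R :=
  (if Bool.eqb i j then G (negb i) (negb j) else - G i j) / det2 G.

Definition tr2 (G T : mat2) : R := sum2 (fun a => sum2 (fun b => inv2 G a b * T a b)).

Definition bil (T : mat2) (X Y : vec2) : R :=
  sum2 (fun i => sum2 (fun j => T i j * X i * Y j)).

Definition dir (X df : vec2) : R := sum2 (fun k => X k * df k).

Definition dbil (T : mat2) (dT : dmat2) (X : vec2) (dX : mat2) (Y : vec2) (dY : mat2)
    (k : bool) : R :=
  sum2 (fun i => sum2 (fun j =>
    dT k i j * X i * Y j + T i j * dX k i * Y j + T i j * X i * dY k j)).

Definition bracket (X : vec2) (dX : mat2) (Y : vec2) (dY : mat2) (i : bool) : R :=
  sum2 (fun k => X k * dY k i - Y k * dX k i).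

Definition lie_jet (X : vec2) (dX : mat2) (T : mat2) (dT : dmat2) (i j : bool) : R :=
  sum2 (fun k => X k * dT k i j + T k j * dX i k + T i k * dX j k).

Definition christoffel (G : mat2) (dG : dmat2) (k i j : bool) : R :=
  / 2 * sum2 (fun l => inv2 G k l * (dG i l j + dG j l i - dG l i j)).

Definition cov_jet (G : mat2) (dG : dmat2) (X Y : vec2) (dY : mat2) (i : bool) : R :=
  sum2 (fun k => X k * dY k i)
  + sum2 (fun k => sum2 (fun l => christoffel G dG i k l * X k * Y l)).

Definition covD_jet (G : mat2) (dG : dmat2) (T : mat2) (dT : dmat2) (a i j : bool) : R :=
  dT a i j - sum2 (fun l => christoffel G dG l a i * T l j)
           - sum2 (fun l => christoffel G dG l a j * T i l).

Definition covD_eval (G : mat2) (dG : dmat2) (T : mat2) (dT : dmat2) (X Z Y : vec2) : R :=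
  sum2 (fun a => sum2 (fun i => sum2 (fun j =>
    X a * Z i * Y j * covD_jet G dG T dT a i j))).

Definition dinv2 (G : mat2) (dG : dmat2) (k i j : bool) : R :=
  - sum2 (fun a => sum2 (fun b => inv2 G i a * dG k a b * inv2 G b j)).

Definition raise_jet (G T : mat2) (a b : bool) : R :=
  sum2 (fun c => sum2 (fun d => inv2 G a c * inv2 G b d * T c d)).

Definition draise_jet (G : mat2) (dG : dmat2) (T : mat2) (dT : dmat2) (k a b : bool) : R :=
  sum2 (fun c => sum2 (fun d =>
    dinv2 G dG k a c * inv2 G b d * T c d + inv2 G a c * dinv2 G dG k b d * T c d
    + inv2 G a c * inv2 G b d * dT k c d)).

Definition div_jet (G : mat2) (dG : dmat2) (T : mat2) (dT : dmat2) (b : bool) : R :=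
  sum2 (fun a => draise_jet G dG T dT a a b
    + sum2 (fun l => christoffel G dG a a l * raise_jet G T l b
                     + christoffel G dG b a l * raise_jet G T a l)).

Lemma bil_sym (G : mat2) (X Y : vec2) :
  G true false = G false true -> bil G X Y = bil G Y X.
Proof. intros HG. unfold bil, sum2. rewrite HG. ring. Qed.

Lemma bracket_self (X : vec2) (dX : mat2) (i : bool) : bracket X dX X dX i = 0.
Proof. unfold bracket, sum2. ring. Qed.

Lemma bil_zero_l (T : mat2) (X Y : vec2) : (forall i, X i = 0) -> bil T X Y = 0.
Proof. intros H. unfold bil, sum2. rewrite !H. ring. Qed.

Lemma bil_zero_r (T : mat2) (X Y : vec2) : (forall i, Y i = 0) -> bil T X Y = 0.
Proof. intros H. unfold bil, sum2. rewrite !H. ring. Qed.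

Lemma dir_ext (X : vec2) (f h : bool -> R) :
  (forall k, f k = h k) -> dir X f = dir X h.
Proof. intros H. unfold dir, sum2. rewrite !H. reflexivity. Qed.

Lemma dir_vanish (X : vec2) (f : bool -> R) : (forall k, f k = 0) -> dir X f = 0.
Proof. intros H. unfold dir, sum2. rewrite !H. ring. Qed.

Lemma dir_dbil_lie X dX Y dY Z dZ T dT :
  dir X (dbil T dT Y dY Z dZ)
  = bil (lie_jet X dX T dT) Y Z + bil T (bracket X dX Y dY) Z + bil T Y (bracket X dX Z dZ).
Proof. unfold dir, dbil, bil, lie_jet, bracket, sum2. ring. Qed.

Lemma dir_dbil_metric G dG X Y dY Z dZ :
  G true false = G false true -> (forall k, dG k true false = dG k false true) ->
  det2 G <> 0 ->
  dir X (dbil G dG Y dY Z dZ) = bil G (cov_jet G dG X Y dY) Z + bil G Y (cov_jet G dG X Z dZ).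
Proof.
  intros HG HdG Hdet. unfold det2 in Hdet. rewrite HG in Hdet.
  unfold dir, dbil, bil, cov_jet, christoffel, inv2, det2, sum2; simpl.
  rewrite ?HG, ?HdG. field. exact Hdet.
Qed.

Lemma cov_jet_torsion_free G dG X dX Y dY i :
  (forall k, dG k true false = dG k false true) ->
  cov_jet G dG X Y dY i - cov_jet G dG Y X dX i = bracket X dX Y dY i.
Proof.
  intros HdG.
  assert (Hsym : christoffel G dG i true false = christoffel G dG i false true)
    by (unfold christoffel, sum2; rewrite !HdG; ring).
  unfold cov_jet, bracket, sum2. rewrite Hsym. ring.
Qed.

Lemma covD_eval_expand G dG T dT X dX Y dY :
  covD_eval G dG T dT X X Y
  = dir X (dbil T dT X dX Y dY) - bil T (cov_jet G dG X X dX) Y - bil T X (cov_jet G dG X Y dY).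
Proof. unfold covD_eval, covD_jet, dir, dbil, bil, cov_jet, sum2. ring. Qed.

Lemma bil_div_jet G dG T dT Y :
  G true false = G false true -> (forall k, dG k true false = dG k false true) ->
  T true false = T false true -> (forall k, dT k true false = dT k false true) ->
  det2 G <> 0 ->
  bil G (div_jet G dG T dT) Y
  = sum2 (fun a => sum2 (fun i => inv2 G a i * sum2 (fun j => covD_jet G dG T dT a i j * Y j))).
Proof.
  intros HG HdG HT HdT Hdet. unfold det2 in Hdet. rewrite HG in Hdet.
  unfold bil, div_jet, draise_jet, raise_jet, covD_jet, dinv2, christoffel, inv2, det2, sum2; simpl.
  rewrite ?HG, ?HdG, ?HT, ?HdT. field. exact Hdet.
Qed.

Definition cross2 (u v : vec2) : R := u false * v true - u true * v false.

Lemma covector_frame_zero (u v c : vec2) :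
  cross2 u v <> 0 -> dir u c = 0 -> dir v c = 0 -> forall i, c i = 0.
Proof.
  unfold dir, sum2. intros Hm Hu Hv i.
  apply (Rmult_eq_reg_r (cross2 u v)); [|exact Hm]. unfold cross2.
  destruct i.
  - transitivity (u false * (v false * c false + v true * c true)
                  - v false * (u false * c false + u true * c true)); [ring|].
    rewrite Hu, Hv. ring.
  - transitivity (v true * (u false * c false + u true * c true)
                  - u true * (v false * c false + v true * c true)); [ring|].
    rewrite Hu, Hv. ring.
Qed.

Definition flat2 (G : mat2) (u : vec2) (i : bool) : R := sum2 (fun j => G i j * u j).

Definition D_xi_mat (G : mat2) (u : vec2) (i j : bool) : R :=
  / (bil G u u ^ 2) * (flat2 G u i * flat2 G u j - / 2 * bil G u u * G i j).

Definition D_xi_xiperp_mat (G : mat2) (u v : vec2) (i j : bool) : R :=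
  / (2 * bil G u u * bil G v v) * (flat2 G u i * flat2 G v j + flat2 G v i * flat2 G u j).

Lemma gram_det (G : mat2) (u v : vec2) :
  bil G u u * bil G v v - bil G u v * bil G v u = det2 G * cross2 u v ^ 2.
Proof. unfold bil, det2, cross2, sum2. ring. Qed.

Lemma inv2_mul_cancel (G : mat2) (C : vec2) (i : bool) :
  G true false = G false true -> det2 G <> 0 ->
  C i = sum2 (fun k => inv2 G i k * sum2 (fun j => G k j * C j)).
Proof.
  intros HG Hd. unfold det2 in Hd. rewrite HG in Hd.
  destruct i; unfold inv2, det2, sum2; simpl; rewrite HG; field; exact Hd.
Qed.

Lemma bil_comb_l (T : mat2) (a b : R) (u v Y : vec2) :
  bil T (fun i => a * u i + b * v i) Y = a * bil T u Y + b * bil T v Y.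
Proof. unfold bil, sum2. ring. Qed.

Lemma bil_comb_r (T : mat2) (a b : R) (u v Y : vec2) :
  bil T Y (fun i => a * u i + b * v i) = a * bil T Y u + b * bil T Y v.
Proof. unfold bil, sum2. ring. Qed.

Lemma bil_frame_zero (E : mat2) (u v : vec2) :
  cross2 u v <> 0 ->
  bil E u u = 0 -> bil E u v = 0 -> bil E v u = 0 -> bil E v v = 0 -> forall i j, E i j = 0.
Proof.
  intros Hm Euu Euv Evu Evv i j.
  assert (Hu : forall j, dir u (fun i => E i j) = 0).
  { apply (covector_frame_zero u v _ Hm).
    - rewrite <- Euu. unfold bil, dir, sum2. ring.
    - rewrite <- Euv. unfold bil, dir, sum2. ring. }
  assert (Hv : forall j, dir v (fun i => E i j) = 0).
  { apply (covector_frame_zero u v _ Hm).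
    - rewrite <- Evu. unfold bil, dir, sum2. ring.
    - rewrite <- Evv. unfold bil, dir, sum2. ring. }
  revert i. exact (covector_frame_zero u v (fun i => E i j) Hm (Hu j) (Hv j)).
Qed.

Lemma cramer2 (a b g00 g01 g10 g11 r s : R) :
  a * g00 + b * g10 = r -> a * g01 + b * g11 = s -> g00 * g11 - g01 * g10 <> 0 ->
  a = (r * g11 - s * g10) / (g00 * g11 - g01 * g10)
  /\ b = (s * g00 - r * g01) / (g00 * g11 - g01 * g10).
Proof. intros Hr Hs Hd. subst r s. split; field; exact Hd. Qed.

Section Frame.

Variables (G : mat2) (u v : vec2).
Hypothesis HG : G true false = G false true.
Hypothesis Horth : bil G u v = 0.
Hypothesis Hnorm : bil G v v = bil G u u.
Hypothesis HN : bil G u u <> 0.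

Local Notation N := (bil G u u).

Lemma frame_gram : det2 G * cross2 u v ^ 2 = N ^ 2.
Proof.
  rewrite <- gram_det, Hnorm, Horth, (bil_sym G v u HG), Horth. ring.
Qed.

Lemma frame_cross_neq0 : cross2 u v <> 0.
Proof.
  intro Hm. pose proof frame_gram as E. rewrite Hm in E. apply HN. nra.
Qed.

Lemma frame_det_neq0 : det2 G <> 0.
Proof.
  intro Hd. pose proof frame_gram as E. rewrite Hd in E. apply HN. nra.
Qed.

Lemma frame_mul_inv i k :
  sum2 (fun j => (u i * u j + v i * v j) * G j k) = if Bool.eqb i k then N else 0.
Proof.
  apply Rminus_diag_uniq. revert k.
  apply (covector_frame_zero u v _ frame_cross_neq0).
  - transitivity (u i * (N - N) + v i * bil G u v).
    + destruct i; unfold bil, dir, sum2; simpl; rewrite HG; ring.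
    + rewrite Horth. ring.
  - transitivity (u i * bil G u v + v i * (bil G v v - N)).
    + destruct i; unfold bil, dir, sum2; simpl; rewrite HG; ring.
    + rewrite Horth, Hnorm. ring.
Qed.

Lemma frame_inv2 i j : inv2 G i j = (u i * u j + v i * v j) / N.
Proof.
  pose proof frame_det_neq0 as Hd. unfold det2 in Hd.
  pose proof (frame_mul_inv i false) as P0. pose proof (frame_mul_inv i true) as P1.
  unfold sum2 in P0, P1. simpl in P0, P1.
  destruct (cramer2 _ _ _ _ _ _ _ _ P0 P1 Hd) as [A0 A1].
  unfold inv2, det2.
  destruct i, j; simpl in *; [rewrite A1 | rewrite A0 | rewrite A1 | rewrite A0];
    field; auto.
Qed.

Lemma frame_expand (C : vec2) i : N * C i = bil G C u * u i + bil G C v * v i.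
Proof.
  rewrite (inv2_mul_cancel G C i HG frame_det_neq0).
  unfold sum2. rewrite !frame_inv2. set (n := N) in *.
  unfold bil, sum2. rewrite HG. field. exact HN.
Qed.

Lemma frame_bil_expand_l (T : mat2) (C Y : vec2) :
  N * bil T C Y = bil G C u * bil T u Y + bil G C v * bil T v Y.
Proof.
  rewrite <- bil_comb_l.
  replace (N * bil T C Y) with (bil T (fun i => N * C i) Y) by (unfold bil, sum2; ring).
  f_equal. apply functional_extensionality. apply frame_expand.
Qed.

Lemma frame_bil_expand_r (T : mat2) (Y C : vec2) :
  N * bil T Y C = bil G C u * bil T Y u + bil G C v * bil T Y v.
Proof.
  rewrite <- bil_comb_r.
  replace (N * bil T Y C) with (bil T Y (fun i => N * C i)) by (unfold bil, sum2; ring).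
  f_equal. apply functional_extensionality. apply frame_expand.
Qed.

Lemma frame_tr2 (T : mat2) : tr2 G T = (bil T u u + bil T v v) / N.
Proof. unfold tr2, sum2. rewrite !frame_inv2. unfold bil, sum2. field. exact HN. Qed.

Lemma frame_traceless (T : mat2) : tr2 G T = 0 -> bil T v v = - bil T u u.
Proof.
  rewrite frame_tr2. intros H.
  apply Rmult_integral in H. destruct H as [H | H]; [lra |].
  exfalso. exact (Rinv_neq_0_compat _ HN H).
Qed.

Lemma frame_decomposition (T : mat2) i j :
  T true false = T false true -> tr2 G T = 0 ->
  T i j = 2 * bil T u u * D_xi_mat G u i j + 2 * bil T u v * D_xi_xiperp_mat G u v i j.
Proof.
  intros HT Htr. pose proof (frame_traceless T Htr) as Tvv.
  set (E := fun i j => T i j - (2 * bil T u u * D_xi_mat G u i j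
                                + 2 * bil T u v * D_xi_xiperp_mat G u v i j)).
  assert (HE : forall X Y, bil E X Y = bil T X Y
    - (2 * bil T u u / N ^ 2 * (bil G X u * bil G Y u - / 2 * N * bil G X Y)
       + bil T u v / N ^ 2 * (bil G X u * bil G Y v + bil G X v * bil G Y u))).
  { intros X Y. unfold E, D_xi_mat, D_xi_xiperp_mat, flat2. rewrite Hnorm.
    set (n := N) in *. set (a := bil T u u). set (b := bil T u v).
    unfold bil, sum2. rewrite HG. field. exact HN. }
  assert (Guv : bil G v u = 0) by (rewrite bil_sym; assumption).
  assert (Tvu : bil T v u = bil T u v) by (apply bil_sym; exact HT).
  enough (Hz : E i j = 0) by (unfold E in Hz; lra).
  apply (bil_frame_zero E u v frame_cross_neq0); rewrite HE, ?Horth, ?Guv, ?Hnorm, ?Tvu, ?Tvv;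
    field; exact HN.
Qed.
End Frame.

Section FrameJet.

Variables (G : mat2) (dG : dmat2) (T : mat2) (dT : dmat2)
          (u v : vec2) (du dv : mat2) (phi : R).
Hypothesis HG : G true false = G false true.
Hypothesis HdG : forall k, dG k true false = dG k false true.
Hypothesis HT : T true false = T false true.
Hypothesis HdT : forall k, dT k true false = dT k false true.
Hypothesis Horth : bil G u v = 0.
Hypothesis Hnorm : bil G v v = bil G u u.
Hypothesis HN : bil G u u <> 0.
Hypothesis Hdorth : forall k, dbil G dG u du v dv k = 0.
Hypothesis Hdnorm : forall k, dbil G dG v dv v dv k = dbil G dG u du u du k.
Hypothesis Hconf : forall i j, lie_jet u du G dG i j = phi * G i j.
Hypothesis Hkid : forall i j, lie_jet u du T dT i j = 0.
Hypothesis Htr : tr2 G T = 0.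
Hypothesis Hdiv : forall b, div_jet G dG T dT b = 0.
Hypothesis Hdtr : forall k, dbil T dT u du u du k + dbil T dT v dv v dv k = 0.

Local Notation N := (bil G u u).
Local Notation Nu := (dir u (dbil G dG u du u du)).
Local Notation Nv := (dir v (dbil G dG u du u du)).
Local Notation Cuu := (cov_jet G dG u u du).
Local Notation Cvv := (cov_jet G dG v v dv).
Local Notation Cvu := (cov_jet G dG v u du).

Let Hcross : cross2 u v <> 0 := frame_cross_neq0 G u v HG Horth Hnorm HN.
Let Hdet : det2 G <> 0 := frame_det_neq0 G u v HG Horth Hnorm HN.

Lemma lie_bil_conformal (X Y : vec2) : bil (lie_jet u du G dG) X Y = phi * bil G X Y.
Proof. unfold bil, sum2. rewrite !Hconf. ring. Qed.

(* Differentiate g(u, v) = 0 and |v|^2 = |u|^2 along u: the conformal factor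
   cancels and [u, v] is g-orthogonal to both u and v. *)
Lemma frame_bracket_zero i : bracket u du v dv i = 0.
Proof.
  set (w := bracket u du v dv).
  assert (Ewu : bil G u w = 0).
  { pose proof (dir_dbil_lie u du u du v dv G dG) as L.
    rewrite (dir_vanish u _ Hdorth), lie_bil_conformal, Horth,
      (bil_zero_l G _ v (bracket_self u du)) in L.
    fold w in L. lra. }
  assert (Ewv : bil G v w = 0).
  { pose proof (dir_dbil_lie u du v dv v dv G dG) as Lv.
    pose proof (dir_dbil_lie u du u du u du G dG) as Lu.
    rewrite (dir_ext u _ _ Hdnorm), !lie_bil_conformal in Lv.
    rewrite lie_bil_conformal, (bil_zero_l G _ u (bracket_self u du)),
      (bil_zero_r G u _ (bracket_self u du)) in Lu.
    rewrite Hnorm in Lv. fold w in Lv. rewrite (bil_sym G w v HG) in Lv. lra. }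
  assert (Hflat : forall i, sum2 (fun j => G i j * w j) = 0).
  { apply (covector_frame_zero u v _ Hcross).
    - rewrite <- Ewu. unfold bil, dir, sum2. ring.
    - rewrite <- Ewv. unfold bil, dir, sum2. ring. }
  rewrite (inv2_mul_cancel G w i HG Hdet). unfold sum2 at 1. rewrite !Hflat. ring.
Qed.

Lemma cov_uv_vu : cov_jet G dG u v dv = Cvu.
Proof.
  apply functional_extensionality. intro i.
  pose proof (cov_jet_torsion_free G dG u du v dv i HdG) as Ht.
  rewrite frame_bracket_zero in Ht. lra.
Qed.

Let metric X Y dY Z dZ :
  dir X (dbil G dG Y dY Z dZ) = bil G (cov_jet G dG X Y dY) Z + bil G Y (cov_jet G dG X Z dZ) :=
  dir_dbil_metric G dG X Y dY Z dZ HG HdG Hdet.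

Lemma cov_uu_u : bil G Cuu u = Nu / 2.
Proof. pose proof (metric u u du u du) as M. rewrite (bil_sym G u Cuu HG) in M. lra. Qed.

Lemma cov_vu_u : bil G Cvu u = Nv / 2.
Proof. pose proof (metric v u du u du) as M. rewrite (bil_sym G u Cvu HG) in M. lra. Qed.

Lemma cov_vu_v : bil G Cvu v = Nu / 2.
Proof.
  pose proof (metric u v dv v dv) as M.
  rewrite cov_uv_vu, (dir_ext u _ _ Hdnorm), (bil_sym G v Cvu HG) in M. lra.
Qed.

Lemma cov_vv_v : bil G Cvv v = Nv / 2.
Proof.
  pose proof (metric v v dv v dv) as M.
  rewrite (dir_ext v _ _ Hdnorm), (bil_sym G v Cvv HG) in M. lra.
Qed.

Lemma cov_uu_v : bil G Cuu v = - (Nv / 2).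
Proof.
  pose proof (metric u u du v dv) as M.
  rewrite cov_uv_vu, (dir_vanish u _ Hdorth), (bil_sym G u Cvu HG),
    cov_vu_u in M.
  lra.
Qed.

Lemma cov_vv_u : bil G Cvv u = - (Nu / 2).
Proof.
  pose proof (metric v u du v dv) as M.
  rewrite (dir_vanish v _ Hdorth), (bil_sym G u Cvv HG), cov_vu_v in M.
  lra.
Qed.

Lemma covD_eval_frame_trace (Y : vec2) :
  covD_eval G dG T dT u u Y + covD_eval G dG T dT v v Y = 0.
Proof.
  assert (Z : bil G (div_jet G dG T dT) Y = 0) by (unfold bil, sum2; rewrite !Hdiv; ring).
  rewrite bil_div_jet in Z by assumption.
  unfold sum2 in Z. rewrite !(frame_inv2 G u v HG Horth Hnorm HN) in Z.
  apply (Rmult_eq_reg_r (/ N)); [| apply Rinv_neq_0_compat; exact HN].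
  rewrite Rmult_0_l, <- Z. set (n := N) in *.
  unfold covD_eval, sum2. field. exact HN.
Qed.

Lemma dir_u_Tuu : dir u (dbil T dT u du u du) = 0.
Proof.
  rewrite (dir_dbil_lie u du), (bil_zero_l T _ u (bracket_self u du)),
    (bil_zero_r T u _ (bracket_self u du)).
  unfold bil, sum2. rewrite !Hkid. ring.
Qed.

Lemma dir_u_Tuv : dir u (dbil T dT u du v dv) = 0.
Proof.
  rewrite (dir_dbil_lie u du), (bil_zero_l T _ v (bracket_self u du)),
    (bil_zero_r T u _ frame_bracket_zero).
  unfold bil, sum2. rewrite !Hkid. ring.
Qed.

Let expand_l (S : mat2) (C Y : vec2) :
  N * bil S C Y = bil G C u * bil S u Y + bil G C v * bil S v Y :=
  frame_bil_expand_l G u v HG Horth Hnorm HN S C Y.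
Let expand_r (S : mat2) (Y C : vec2) :
  N * bil S Y C = bil G C u * bil S Y u + bil G C v * bil S Y v :=
  frame_bil_expand_r G u v HG Horth Hnorm HN S Y C.
Let Tvu : bil T v u = bil T u v := bil_sym T v u HT.
Let Tvv : bil T v v = - bil T u u := frame_traceless G u v HG Horth Hnorm HN T Htr.

Lemma frame_div_u : dir u (dbil T dT u du u du) + dir v (dbil T dT v dv u du) = 0.
Proof.
  pose proof (covD_eval_frame_trace u) as Z.
  rewrite (covD_eval_expand G dG T dT u du u du), (covD_eval_expand G dG T dT v dv u du) in Z.
  enough (Hc : N * (bil T Cuu u + bil T u Cuu + bil T Cvv u + bil T v Cvu) = 0).
  { apply Rmult_integral in Hc. destruct Hc as [Hc | Hc]; [contradiction | lra]. }
  rewrite !Rmult_plus_distr_l, (expand_l T Cuu u), (expand_r T u Cuu), (expand_l T Cvv u),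
    (expand_r T v Cvu), cov_uu_u, cov_uu_v, cov_vv_u, cov_vv_v, cov_vu_u, cov_vu_v, Tvu, Tvv.
  ring.
Qed.

Lemma frame_div_v : dir u (dbil T dT u du v dv) + dir v (dbil T dT v dv v dv) = 0.
Proof.
  pose proof (covD_eval_frame_trace v) as Z.
  rewrite (covD_eval_expand G dG T dT u du v dv), (covD_eval_expand G dG T dT v dv v dv),
    cov_uv_vu in Z.
  enough (Hc : N * (bil T Cuu v + bil T u Cvu + bil T Cvv v + bil T v Cvv) = 0).
  { apply Rmult_integral in Hc. destruct Hc as [Hc | Hc]; [contradiction | lra]. }
  rewrite !Rmult_plus_distr_l, (expand_l T Cuu v), (expand_r T u Cvu), (expand_l T Cvv v),
    (expand_r T v Cvv), cov_uu_u, cov_uu_v, cov_vv_u, cov_vv_v, cov_vu_u, cov_vu_v, Tvu, Tvv.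
  ring.
Qed.

Lemma frame_jet_stationary :
  (forall k, dbil T dT u du u du k = 0) /\ (forall k, dbil T dT u du v dv k = 0).
Proof.
  assert (Hsym : forall k, dbil T dT v dv u du k = dbil T dT u du v dv k)
    by (intro k; unfold dbil, sum2; rewrite HT, HdT; ring).
  assert (Hvuv : dir v (dbil T dT u du v dv) = 0).
  { pose proof frame_div_u as Q. rewrite dir_u_Tuu, (dir_ext v _ _ Hsym) in Q. lra. }
  assert (Hvuu : dir v (dbil T dT u du u du) = 0).
  { pose proof frame_div_v as Q. rewrite dir_u_Tuv in Q.
    assert (Hopp : forall k, dbil T dT u du u du k = - dbil T dT v dv v dv k)
      by (intro k; pose proof (Hdtr k); lra).
    rewrite (dir_ext v _ _ Hopp). unfold dir, sum2 in *. lra. }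
  split; apply (covector_frame_zero u v _ Hcross).
  - exact dir_u_Tuu.
  - exact Hvuu.
  - exact dir_u_Tuv.
  - exact Hvuv.
Qed.
End FrameJet.

(** * Partial derivatives and local constancy *)

Definition set_coord (k : bool) (q : pt) (t : R) : pt :=
  if k then (fst q, t) else (t, snd q).
Definition coord (k : bool) (q : pt) : R := if k then snd q else fst q.

Definition is_pd (k : bool) (f : pt -> R) (q : pt) (l : R) : Prop :=
  is_derive (fun t => f (set_coord k q t)) (coord k q) l.

Lemma set_coord_coord k q : set_coord k q (coord k q) = q.
Proof. destruct k, q; reflexivity. Qed.

Lemma pd_Derive k f q : pd k f q = Derive (fun t => f (set_coord k q t)) (coord k q).
Proof. destruct k; reflexivity. Qed.

Lemma is_pd_unique k f q l : is_pd k f q l -> pd k f q = l.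
Proof. rewrite pd_Derive. apply is_derive_unique. Qed.

Lemma is_pd_eq k f q l l' : is_pd k f q l -> l = l' -> is_pd k f q l'.
Proof. intros H <-. exact H. Qed.

Lemma is_pd_plus k f h q a b :
  is_pd k f q a -> is_pd k h q b -> is_pd k (fun x => f x + h x) q (a + b).
Proof. intros Ha Hb. exact (is_derive_plus _ _ _ _ _ Ha Hb). Qed.

Lemma is_pd_minus k f h q a b :
  is_pd k f q a -> is_pd k h q b -> is_pd k (fun x => f x - h x) q (a - b).
Proof. intros Ha Hb. exact (is_derive_minus _ _ _ _ _ Ha Hb). Qed.

Lemma is_pd_opp k f q a : is_pd k f q a -> is_pd k (fun x => - f x) q (- a).
Proof. intros Ha. exact (is_derive_opp _ _ _ Ha). Qed.

Lemma is_pd_mult k f h q a b :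
  is_pd k f q a -> is_pd k h q b -> is_pd k (fun x => f x * h x) q (a * h q + f q * b).
Proof.
  intros Ha Hb. pose proof (is_derive_mult _ _ _ _ _ Ha Hb Rmult_comm) as H.
  cbv beta in H. rewrite set_coord_coord in H. exact H.
Qed.

Lemma is_pd_div k f h q a b : is_pd k f q a -> is_pd k h q b -> h q <> 0 ->
  is_pd k (fun x => f x / h x) q ((a * h q - f q * b) / h q ^ 2).
Proof.
  intros Ha Hb Hh. rewrite <- (set_coord_coord k q) in Hh.
  pose proof (is_derive_div _ _ _ _ _ Ha Hb Hh) as H.
  cbv beta in H. rewrite set_coord_coord in H. exact H.
Qed.

Lemma is_pd_sum2 k (F : bool -> pt -> R) q (dF : bool -> R) :
  (forall i, is_pd k (F i) q (dF i)) -> is_pd k (fun x => sum2 (fun i => F i x)) q (sum2 dF).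
Proof. intros H. apply is_pd_plus; apply H. Qed.

Lemma smooth_is_pd U f k q : smooth_on U f -> U q -> is_pd k f q (pd k f q).
Proof.
  intros Hs Hq. destruct (Hs nil q Hq) as [_ [H1 H2]].
  rewrite pd_Derive. destruct k; apply Derive_correct; assumption.
Qed.

Lemma ball_pt (q x : pt) (e : R) :
  ball q e x <-> Rabs (fst x - fst q) < e /\ Rabs (snd x - snd q) < e.
Proof. destruct q, x. reflexivity. Qed.

Lemma ball_set_coord k q (e : posreal) t : Rabs (t - coord k q) < e -> ball q e (set_coord k q t).
Proof.
  intros Ht. apply ball_pt. pose proof (cond_pos e).
  destruct k, q; simpl in *; rewrite Rminus_diag, Rabs_R0; auto.
Qed.

Lemma open_ball_pt (p : pt) (e : R) : open_pt (ball p e).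
Proof.
  destruct p as [p1 p2]. intros [x1 x2] Hx.
  destruct (proj1 (ball_pt _ _ _) Hx) as [H1 H2]. simpl in H1, H2.
  set (m := Rmax (Rabs (x1 - p1)) (Rabs (x2 - p2))).
  assert (Hm1 : Rabs (x1 - p1) <= m) by apply Rmax_l.
  assert (Hm2 : Rabs (x2 - p2) <= m) by apply Rmax_r.
  assert (Hm : 0 < e - m) by (assert (m < e) by (apply Rmax_lub_lt; assumption); lra).
  clearbody m. exists (mkposreal _ Hm). intros [y1 y2] Hy.
  destruct (proj1 (ball_pt _ _ _) Hy) as [Hy1 Hy2]. simpl in Hy1, Hy2.
  apply ball_pt. simpl.
  pose proof (Rabs_triang (y1 - x1) (x1 - p1)).
  pose proof (Rabs_triang (y2 - x2) (x2 - p2)).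
  replace (y1 - x1 + (x1 - p1)) with (y1 - p1) in * by ring.
  replace (y2 - x2 + (x2 - p2)) with (y2 - p2) in * by ring.
  split; lra.
Qed.

Lemma pd_ext_loc (W : pt -> Prop) f h k q :
  open W -> W q -> (forall x, W x -> f x = h x) -> pd k f q = pd k h q.
Proof.
  intros HW Hq Hfh. rewrite !pd_Derive. apply Derive_ext_loc.
  destruct (HW q Hq) as [e He]. exists e. intros t Ht.
  apply Hfh, He, ball_set_coord. exact Ht.
Qed.

Lemma is_pd_loc_zero (W : pt -> Prop) f k q l :
  open W -> W q -> (forall x, W x -> f x = 0) -> is_pd k f q l -> l = 0.
Proof.
  intros HW Hq Hf Hd. rewrite <- (is_pd_unique _ _ _ _ Hd).
  rewrite (pd_ext_loc W f (fun _ => 0) k q HW Hq Hf), pd_Derive. apply Derive_const.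
Qed.

Definition mat_at (T : cov2) (q : pt) : mat2 := fun a b => T a b q.
Definition dmat_at (T : cov2) (q : pt) : dmat2 := fun k a b => pd k (T a b) q.
Definition vec_at (X : vfield) (q : pt) : vec2 := fun i => X i q.
Definition dvec_at (X : vfield) (q : pt) : mat2 := fun k i => pd k (X i) q.

Lemma is_pd_gdot U (T : cov2) (X Y : vfield) k q :
  U q -> (forall i j, smooth_on U (T i j)) ->
  (forall i, smooth_on U (X i)) -> (forall i, smooth_on U (Y i)) ->
  is_pd k (gdot T X Y) q
    (dbil (mat_at T q) (dmat_at T q) (vec_at X q) (dvec_at X q) (vec_at Y q) (dvec_at Y q) k).
Proof.
  intros Hq HT HX HY. apply is_pd_sum2. intro i. apply is_pd_sum2. intro j.
  eapply is_pd_eq.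
  { apply is_pd_mult; [apply is_pd_mult|]; apply (smooth_is_pd U); auto. }
  unfold mat_at, dmat_at, vec_at, dvec_at. ring.
Qed.

Section InverseMetric.

Variables (U : pt -> Prop) (g : cov2) (q : pt).
Hypothesis Hsg : forall a b, smooth_on U (g a b).
Hypothesis Hq : U q.
Hypothesis Hdet : gdet g q <> 0.
Hypothesis HG : g true false q = g false true q.
Hypothesis HdG : forall k, pd k (g true false) q = pd k (g false true) q.

Lemma is_pd_ginv k i j : is_pd k (ginv g i j) q (dinv2 (mat_at g q) (dmat_at g q) k i j).
Proof.
  assert (Hnum : is_pd k (fun x => if Bool.eqb i j then g (negb i) (negb j) x else - g i j x) q
                   (if Bool.eqb i j then pd k (g (negb i) (negb j)) q else - pd k (g i j) q)).
  { destruct i, j; simpl; try apply is_pd_opp; apply (smooth_is_pd U); auto. }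
  assert (Hgdet : is_pd k (gdet g) q
     (pd k (g false false) q * g true true q + g false false q * pd k (g true true) q
      - (pd k (g false true) q * g true false q + g false true q * pd k (g true false) q))).
  { unfold gdet. apply is_pd_minus; apply is_pd_mult; apply (smooth_is_pd U); auto. }
  eapply is_pd_eq. { exact (is_pd_div k _ _ q _ _ Hnum Hgdet Hdet). }
  pose proof Hdet as Hd. unfold gdet in Hd. rewrite HG in Hd. pose proof (HdG k) as Hk.
  destruct i, j; unfold dinv2, inv2, det2, gdet, mat_at, dmat_at, sum2; simpl;
    rewrite ?HG, ?Hk; field; exact Hd.
Qed.

Lemma is_pd_raise2 (D : cov2) k a b :
  (forall a b, smooth_on U (D a b)) ->
  is_pd k (raise2 g D a b) q (draise_jet (mat_at g q) (dmat_at g q) (mat_at D q) (dmat_at D q) k a b).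
Proof.
  intros HsD. apply is_pd_sum2. intro c. apply is_pd_sum2. intro d.
  eapply is_pd_eq.
  { apply is_pd_mult; [apply is_pd_mult|]; [apply is_pd_ginv | apply is_pd_ginv |].
    apply (smooth_is_pd U); auto. }
  unfold mat_at, dmat_at, ginv, inv2, gdet, det2. ring.
Qed.

Lemma divD_div_jet (D : cov2) b :
  (forall a b, smooth_on U (D a b)) ->
  divD g D b q = div_jet (mat_at g q) (dmat_at g q) (mat_at D q) (dmat_at D q) b.
Proof.
  intros HsD. unfold divD, div_jet, sum2.
  rewrite !(is_pd_unique _ _ _ _ (is_pd_raise2 D _ _ _ HsD)). reflexivity.
Qed.
End InverseMetric.

Lemma is_derive_zero_const (f : R -> R) c (e a b : R) :
  (forall t, Rabs (t - c) < e -> is_derive f t 0) ->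
  Rabs (a - c) < e -> Rabs (b - c) < e -> f a = f b.
Proof.
  intros Hd Ha Hb.
  assert (Hin : forall x, Rmin a b <= x <= Rmax a b -> Rabs (x - c) < e).
  { intros x Hx. apply Rabs_lt_between' in Ha, Hb. apply Rabs_lt_between'.
    unfold Rmin, Rmax in Hx. destruct (Rle_dec a b); lra. }
  destruct (MVT_gen f a b (fun _ => 0)) as [x [_ Hx]].
  - intros x Hx. apply Hd, Hin. lra.
  - intros x Hx. apply continuity_pt_filterlim, (ex_derive_continuous f).
    exists 0. apply Hd, Hin, Hx.
  - lra.
Qed.

Lemma is_pd_zero_const_ball (F : pt -> R) (p : pt) (e : R) :
  (forall q, ball p e q -> forall k, is_pd k F q 0) -> forall q, ball p e q -> F q = F p.
Proof.
  intros H [q1 q2] Hq. destruct p as [p1 p2].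
  destruct (proj1 (ball_pt _ _ _) Hq) as [H1 H2]. simpl in H1, H2.
  assert (H0 : forall z, Rabs (z - z) < e).
  { intro z. rewrite Rminus_diag, Rabs_R0. pose proof (Rabs_pos (q1 - p1)). lra. }
  transitivity (F (q1, p2)).
  - apply (is_derive_zero_const (fun s => F (q1, s)) p2 e); [| exact H2 | apply H0].
    intros t Ht. exact (H (q1, t) (proj2 (ball_pt (p1, p2) (q1, t) e) (conj H1 Ht)) true).
  - apply (is_derive_zero_const (fun s => F (s, p2)) p1 e); [| exact H1 | apply H0].
    intros t Ht. exact (H (t, p2) (proj2 (ball_pt (p1, p2) (t, p2) e) (conj Ht (H0 p2))) false).
Qed.

Lemma continuous_neq0_locally (f : pt -> R) p :
  continuous f p -> f p <> 0 -> locally p (fun x => f x <> 0).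
Proof.
  intros Hc Hp. apply (Hc (fun y => y <> 0)). exists (mkposreal _ (Rabs_pos_lt _ Hp)). intros y Hy Hy0.
  change (Rabs (y - f p) < Rabs (f p)) in Hy.
  rewrite Hy0, Rminus_0_l, Rabs_Ropp in Hy. lra.
Qed.

Lemma continuous_gdot U (T : cov2) (X Y : vfield) q :
  U q -> (forall i j, smooth_on U (T i j)) ->
  (forall i, smooth_on U (X i)) -> (forall i, smooth_on U (Y i)) ->
  continuous (gdot T X Y) q.
Proof.
  intros Hq HT HX HY.
  assert (Hc : forall f, smooth_on U f -> continuous f q) by (intros f Hf; exact (proj1 (Hf nil q Hq))).
  assert (Hadd : forall f h : pt -> R,
    continuous f q -> continuous h q -> continuous (fun x => f x + h x) q)
    by (intros f h; exact (continuous_plus f h q)).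
  assert (Hmul : forall f h : pt -> R,
    continuous f q -> continuous h q -> continuous (fun x => f x * h x) q)
    by (intros f h; exact (continuous_mult f h q)).
  unfold gdot, sum2. repeat apply Hadd; repeat apply Hmul; apply Hc; auto.
Qed.

Lemma open_nonvanishing_ball (U : pt -> Prop) (f : pt -> R) p :
  open U -> U p -> continuous f p -> f p <> 0 ->
  exists e : posreal, forall q, ball p e q -> U q /\ f q <> 0.
Proof.
  intros HU Hp Hc Hf.
  exact (filter_and _ _ (HU p Hp) (continuous_neq0_locally f p Hc Hf)).
Qed.

(** * Killing initial data *)

Section KillingInitialData.

Variables (U W : pt -> Prop) (g D : cov2) (xi xp : vfield) (phi : pt -> R).
Hypothesis HW : open W.
Hypothesis HWU : forall q, W q -> U q /\ gnorm2 g xi q <> 0.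
Hypothesis Hsg : forall i j, smooth_on U (g i j).
Hypothesis Hgsym : forall i j q, U q -> g i j q = g j i q.
Hypothesis Hsxi : forall i, smooth_on U (xi i).
Hypothesis Hsxp : forall i, smooth_on U (xp i).
Hypothesis Hconf : forall q, U q -> forall i j, lie2 xi g i j q = phi q * g i j q.
Hypothesis Horth : forall q, U q -> gdot g xi xp q = 0.
Hypothesis Hnorm : forall q, U q -> gnorm2 g xp q = gnorm2 g xi q.
Hypothesis HsD : forall i j, smooth_on U (D i j).
Hypothesis HDsym : forall i j q, U q -> D i j q = D j i q.
Hypothesis Htt : transverse_traceless_on U g D.
Hypothesis Hkid : forall q, U q -> forall i j, lie2 xi D i j q = 0.

Let HU_of_W q (Hq : W q) : U q := proj1 (HWU q Hq).
Let gsym_at q (Hq : W q) : mat_at g q true false = mat_at g q false true :=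
  Hgsym true false q (HU_of_W q Hq).
Let orth_at q (Hq : W q) : bil (mat_at g q) (vec_at xi q) (vec_at xp q) = 0 :=
  Horth q (HU_of_W q Hq).
Let norm_at q (Hq : W q) :
  bil (mat_at g q) (vec_at xp q) (vec_at xp q) = bil (mat_at g q) (vec_at xi q) (vec_at xi q) :=
  Hnorm q (HU_of_W q Hq).
Let norm_neq0_at q (Hq : W q) : bil (mat_at g q) (vec_at xi q) (vec_at xi q) <> 0 :=
  proj2 (HWU q Hq).

Lemma dmat_at_sym (T : cov2) q k :
  (forall i j x, U x -> T i j x = T j i x) -> W q ->
  dmat_at T q k true false = dmat_at T q k false true.
Proof.
  intros HT Hq. apply (pd_ext_loc W _ _ k q HW Hq).
  intros x Hx. exact (HT _ _ x (HU_of_W x Hx)).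
Qed.

Lemma jet_gdot_orth q : W q -> forall k,
  dbil (mat_at g q) (dmat_at g q) (vec_at xi q) (dvec_at xi q) (vec_at xp q) (dvec_at xp q) k = 0.
Proof.
  intros Hq k. apply (is_pd_loc_zero W (gdot g xi xp) k q _ HW Hq).
  - intros x Hx. exact (orth_at x Hx).
  - exact (is_pd_gdot U g xi xp k q (HU_of_W q Hq) Hsg Hsxi Hsxp).
Qed.

Lemma jet_gnorm2_eq q : W q -> forall k,
  dbil (mat_at g q) (dmat_at g q) (vec_at xp q) (dvec_at xp q) (vec_at xp q) (dvec_at xp q) k
  = dbil (mat_at g q) (dmat_at g q) (vec_at xi q) (dvec_at xi q) (vec_at xi q) (dvec_at xi q) k.
Proof.
  intros Hq k. apply Rminus_diag_uniq.
  apply (is_pd_loc_zero W (fun x => gnorm2 g xp x - gnorm2 g xi x) k q _ HW Hq).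
  - intros x Hx. exact (Rminus_diag_eq _ _ (Hnorm x (HU_of_W x Hx))).
  - apply is_pd_minus; apply (is_pd_gdot U); auto.
Qed.

Lemma jet_frame_trace q : W q -> forall k,
  dbil (mat_at D q) (dmat_at D q) (vec_at xi q) (dvec_at xi q) (vec_at xi q) (dvec_at xi q) k
  + dbil (mat_at D q) (dmat_at D q) (vec_at xp q) (dvec_at xp q) (vec_at xp q) (dvec_at xp q) k
  = 0.
Proof.
  intros Hq k. apply (is_pd_loc_zero W (fun x => gdot D xi xi x + gdot D xp xp x) k q _ HW Hq).
  - intros x Hx.
    pose proof (frame_traceless _ _ _ (gsym_at x Hx) (orth_at x Hx) (norm_at x Hx)
      (norm_neq0_at x Hx) (mat_at D x) (proj2 (Htt x (HU_of_W x Hx)))) as Htr.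
    change (bil (mat_at D x) (vec_at xi x) (vec_at xi x)
            + bil (mat_at D x) (vec_at xp x) (vec_at xp x) = 0).
    lra.
  - apply is_pd_plus; apply (is_pd_gdot U); auto.
Qed.

Lemma div_jet_at q : W q -> forall b,
  div_jet (mat_at g q) (dmat_at g q) (mat_at D q) (dmat_at D q) b = 0.
Proof.
  intros Hq b.
  pose proof (frame_det_neq0 _ _ _ (gsym_at q Hq) (orth_at q Hq) (norm_at q Hq)
    (norm_neq0_at q Hq)) as Hdet.
  rewrite <- (divD_div_jet U g q Hsg (HU_of_W q Hq) Hdet (gsym_at q Hq)
    (fun k => dmat_at_sym g q k Hgsym Hq) D b HsD).
  exact (proj1 (Htt q (HU_of_W q Hq)) b).
Qed.

Lemma frame_coefficients_stationary q k : W q ->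
  is_pd k (gdot D xi xi) q 0 /\ is_pd k (gdot D xi xp) q 0.
Proof.
  intros Hq. pose proof (HU_of_W q Hq) as HUq.
  destruct (frame_jet_stationary (mat_at g q) (dmat_at g q) (mat_at D q) (dmat_at D q)
    (vec_at xi q) (vec_at xp q) (dvec_at xi q) (dvec_at xp q) (phi q)
    (gsym_at q Hq) (fun k => dmat_at_sym g q k Hgsym Hq)
    (HDsym true false q HUq) (fun k => dmat_at_sym D q k HDsym Hq)
    (orth_at q Hq) (norm_at q Hq) (norm_neq0_at q Hq)
    (jet_gdot_orth q Hq) (jet_gnorm2_eq q Hq) (Hconf q HUq) (Hkid q HUq)
    (proj2 (Htt q HUq)) (div_jet_at q Hq) (jet_frame_trace q Hq)) as [Huu Huv].
  split; eapply is_pd_eq; try apply (is_pd_gdot U); auto.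
Qed.
End KillingInitialData.

Theorem theorem9p2 (U : pt -> Prop) (g : cov2) (xi xp : vfield) (D : cov2) :
  open_pt U ->
  riemannian_on U g ->
  conformal_killing_on U g xi ->
  (* xi^perp: conformal Killing, orthogonal to xi, same norm as xi *)
  conformal_killing_on U g xp ->
  (forall p, U p -> gdot g xi xp p = 0) ->
  (forall p, U p -> gnorm2 g xp p = gnorm2 g xi p) ->
  (* D: smooth, symmetric, transverse-traceless, KID equation *)
  (forall i j, smooth_on U (D i j)) ->
  (forall i j p, U p -> D i j p = D j i p) ->
  transverse_traceless_on U g D ->
  (forall p, U p -> forall i j, lie2 xi D i j p = 0) ->
  forall p, U p -> gnorm2 g xi p <> 0 ->
    exists V : pt -> Prop, open_pt V /\ V p /\
      (forall q, V q -> U q /\ gnorm2 g xi q <> 0) /\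
      exists a b : R, forall q, V q -> forall i j,
        D i j q = a * D_xi g xi i j q + b * D_xi_xiperp g xi xp i j q.
Proof.
  intros HU [Hsg [Hgsym _]] [Hsxi [phi Hconf]] [Hsxp _] Horth Hnorm HsD HDsym Htt Hkid p Hp Hp0.
  destruct (open_nonvanishing_ball U (gnorm2 g xi) p HU Hp
    (continuous_gdot U g xi xi p Hp Hsg Hsxi Hsxi) Hp0) as [e He].
  pose proof (frame_coefficients_stationary U (ball p e) g D xi xp phi (open_ball_pt p e) He
    Hsg Hgsym Hsxi Hsxp Hconf Horth Hnorm HsD HDsym Htt Hkid) as Hst.
  exists (ball p e). split; [apply open_ball_pt|]. split; [apply ball_center|]. split; [exact He|].
  exists (2 * gdot D xi xi p), (2 * gdot D xi xp p). intros q Hq i j.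
  rewrite <- (is_pd_zero_const_ball (gdot D xi xi) p e (fun q Hq k => proj1 (Hst q k Hq)) q Hq),
    <- (is_pd_zero_const_ball (gdot D xi xp) p e (fun q Hq k => proj2 (Hst q k Hq)) q Hq).
  destruct (He q Hq) as [HUq Hq0].
  exact (frame_decomposition (mat_at g q) (vec_at xi q) (vec_at xp q) (Hgsym _ _ q HUq)
    (Horth q HUq) (Hnorm q HUq) Hq0 (mat_at D q) i j (HDsym _ _ q HUq) (proj2 (Htt q HUq))).
Qed.
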